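(* Let $H$ be a hexagonal system with a perfect matching. The edges of $H$ fall into three classes of mutually parallel edges (the three edge directions of the hexagonal lattice); let $S$ be one of these classes of minimum cardinality. Then $cf(H)\le |S|$.
   Context: A hexagonal system (HS) is a finite 2-connected plane graph in which every interior face is a regular hexagon of the hexagonal lattice. For a graph $G$ with a perfect matching and a perfect matching $M$ of $G$, a forcing set of $M$ is a subset of $M$ contained in no other perfect matching of $G$. A complete forcing set of $G$ is a set $S\subseteq E(G)$ such that $S\cap M$ is a forcing set of $M$ for every perfect matching $M$ of $G$; $cf(G)$ is the minimum cardinality of a complete forcing set of $G$. *)

From HB Require Import structures.
From mathcomp Require Import all_boot all_order all_algebra.
From mathcomp Require Import finmap.
Set Implicit Arguments. Unset Strict Implicit. Unset Printing Implicit Defensive.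
Local Open Scope fset_scope.

(* The hexagonal (honeycomb) lattice, in the standard "brick wall" model. *)
(* Vertices are the points (x,y) of Z^2.  Edges:                           *)
(*   ((x,y), false) : the "horizontal" edge  (x,y) -- (x+1,y)  (all x,y)   *)
(*   ((x,y), true ) : the "vertical" edge    (x,y) -- (x,y+1)  (x+y even)  *)
(* This graph is (plane-)isomorphic to the honeycomb lattice; its faces    *)
(* (the hexagons) are the bricks with lower-left corner (x,y), x+y even.   *)
(* The three classes of parallel edges of the honeycomb correspond to:     *)
(* vertical edges, horizontal edges with x+y even, horizontal edges with   *)
(* x+y odd.                                                                *)

Definition vertex := (int * int)%type.
Definition edge := (vertex * bool)%type.
Definition cell := (int * int)%type.

Definition evenZ (z : int) : bool := ~~ odd `|z|%N.

Definition lattice_edge (e : edge) : bool :=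
  if e.2 then evenZ (e.1.1 + e.1.2)%R else true.

Definition end1 (e : edge) : vertex := e.1.
Definition end2 (e : edge) : vertex :=
  if e.2 then (e.1.1, e.1.2 + 1)%R else (e.1.1 + 1, e.1.2)%R.

Definition incident (v : vertex) (e : edge) : bool :=
  (end1 e == v) || (end2 e == v).

Definition dir (e : edge) : 'I_3 :=
  if e.2 then inord 0
  else if evenZ (e.1.1 + e.1.2)%R then inord 1 else inord 2.

Definition valid_cell (c : cell) : bool := evenZ (c.1 + c.2)%R.

Definition cell_edges (c : cell) : seq edge :=
  let x := c.1 in let y := c.2 in
  [:: ((x, y), false); ((x + 1, y)%R, false);
      ((x, y + 1)%R, false); ((x + 1, y + 1)%R, false);
      ((x, y), true); ((x + 2, y)%R, true)].

Definition cell_adj : rel cell := fun c d =>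
  valid_cell c && valid_cell d &&
  ((d == (c.1 + 2, c.2)%R) || (d == (c.1 - 2, c.2)%R) ||
   (d == (c.1 + 1, c.2 + 1)%R) || (d == (c.1 - 1, c.2 + 1)%R) ||
   (d == (c.1 + 1, c.2 - 1)%R) || (d == (c.1 - 1, c.2 - 1)%R)).

Definition HEdges (C : {fset cell}) : {fset edge} :=
  [fset e | c in C, e in cell_edges c].

Definition HVerts (C : {fset cell}) : {fset vertex} :=
  [fset end1 e | e in HEdges C] `|` [fset end2 e | e in HEdges C].

Definition adj (E : {fset edge}) : rel vertex := fun u w =>
  has (fun e => ((end1 e == u) && (end2 e == w)) ||
                ((end1 e == w) && (end2 e == u))) (E : seq edge).

Definition two_connected (V : {fset vertex}) (E : {fset edge}) : Prop :=
  2 < #|` V| /\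
  forall (z u w : vertex), u \in V -> w \in V -> u != z -> w != z ->
    exists p : seq vertex,
      [/\ path (adj E) u p, last u p = w, z \notin p & all (mem V) p].

(* A hexagonal system, given by its finite nonempty set C of hexagons:
   its graph is the union of the boundaries of the hexagons of C; this
   graph is 2-connected, and its interior faces are exactly the hexagons of
   C, i.e. the lattice hexagons not in C form a single connected region
   (the unbounded face); there are no holes. *)
Definition hexagonal_system (C : {fset cell}) : Prop :=
  [/\ C != fset0,
      {in C, forall c, valid_cell c},
      two_connected (HVerts C) (HEdges C) &
      forall c d : cell, valid_cell c -> valid_cell d -> c \notin C -> d \notin C ->
        exists p : seq cell, [/\ path cell_adj c p, last c p = d &
                                 all (fun x => x \notin C) p]].

Definition perfect_matching (V : {fset vertex}) (E : {fset edge})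
  (M : {fset edge}) : Prop :=
  M `<=` E /\ forall v, v \in V -> #|` [fset e in M | incident v e] | = 1%N.

Definition forcing_set (V : {fset vertex}) (E : {fset edge})
  (M F : {fset edge}) : Prop :=
  F `<=` M /\ forall M', perfect_matching V E M' -> F `<=` M' -> M' = M.

Definition complete_forcing_set (V : {fset vertex}) (E : {fset edge})
  (S : {fset edge}) : Prop :=
  S `<=` E /\
  forall M, perfect_matching V E M -> forcing_set V E M (S `&` M).

Definition cf_le (V : {fset vertex}) (E : {fset edge}) (k : nat) : Prop :=
  exists S, complete_forcing_set V E S /\ (#|` S| <= k)%N.

Definition edge_class (E : {fset edge}) (d : 'I_3) : {fset edge} :=
  [fset e in E | dir e == d].

From HB Require Import structures.
From mathcomp Require Import all_boot all_order all_algebra.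
From mathcomp Require Import finmap zify.
Set Implicit Arguments. Unset Strict Implicit. Unset Printing Implicit Defensive.
Import Order.TTheory GRing.Theory Num.Theory.
Local Open Scope fset_scope.
Local Open Scope ring_scope.

(* We prove more than the theorem asks: in ANY subgraph of the hexagonal
   lattice, EVERY direction class d of edges is a complete forcing set; in
   other words a perfect matching M is determined by its edges of direction
   d.  The minimality of the class is then irrelevant.

   The lattice is bipartite (vertices colored black/white by the parity
   'par').  For a vertex weight w, the flux of w through an edge e is
   w(white end) - w(black end); summed over a perfect matching M it equals
   the signed total of w over the vertices, hence it is the same for all
   perfect matchings, and so it has equal sums over M \ M' and M' \ M.
   The edges not of direction d form parallel zigzag lines, indexed by a
   'level' and traversed with a 'pos'ition coordinate; edges of direction d
   go from a black vertex to a white vertex of strictly higher level.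
   - A threshold weight on levels has zero flux through non-d edges and
     nonnegative flux through d-edges: so if every d-edge of M lies in M',
     the converse holds as well.
   - A weight supported on a half-line of a single zigzag line has nonzero
     flux through exactly one non-d edge e0: so once M and M' agree on
     d-edges, they also agree on e0. *)

Definition par (v : vertex) : bool := evenZ (v.1 + v.2).

Lemma evenZE (z : int) : evenZ z = (z %% 2 == 0)%Z.
Proof. by rewrite /evenZ -dvdn2 -(dvdzE 2 z); lia. Qed.

Lemma par_ends (e : edge) : par (end1 e) != par (end2 e).
Proof. by case: e => [[x y] []]; rewrite /par /end1 /end2 /= !evenZE; lia. Qed.

Lemma end1_neq_end2 (e : edge) : end1 e != end2 e.
Proof. by apply: contraNneq (par_ends e) => ->. Qed.

Lemma dir_val (e : edge) :
  val (dir e) = if e.2 then 0%N else if par e.1 then 1%N else 2%N.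
Proof.
rewrite /dir /par; case: e.2; first exact: (@inordK 2 0).
by case: evenZ; [exact: (@inordK 2 1) | exact: (@inordK 2 2)].
Qed.

(* Coordinates adapted to a direction d: the edges not of direction d form
   zigzag lines; 'level d v' indexes the line through v, 'pos d v' is the
   position of v along it, and 'edge_pos d e' is the smaller position of the
   two ends of a non-d edge e. *)
Definition level (d : 'I_3) (v : vertex) : int :=
  match val d with
  | 0%N => v.2
  | 1%N => v.1 - v.2 + (if par v then 0 else 1)
  | _ => - (v.1 + v.2) + (if par v then 0 else 1)
  end.

Definition pos (d : 'I_3) (v : vertex) : int :=
  match val d with 0%N => v.1 | 1%N => v.1 + v.2 | _ => v.2 - v.1 end.

Definition edge_pos (d : 'I_3) (e : edge) : int :=
  match val d with
  | 0%N => e.1.1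
  | 1%N => e.1.1 + e.1.2
  | _ => if e.2 then e.1.2 - e.1.1 else e.1.2 - e.1.1 - 1
  end.

Definition black_end (e : edge) : vertex := if par (end1 e) then end1 e else end2 e.
Definition white_end (e : edge) : vertex := if par (end1 e) then end2 e else end1 e.

Ltac case_ifs := repeat match goal with
  | |- context[if ?c then _ else _] => let E := fresh "E" in case E: c
  | H : context[if ?c then _ else _] |- _ => let E := fresh "E" in case E: c in H
  end.

Ltac coord_arith :=
  rewrite /level /pos /edge_pos /black_end /white_end /end1 /end2 /lattice_edge /par /=
          ?evenZE;
  move=> *; case_ifs; simpl in *; try lia.

Lemma level_along (d : 'I_3) (e : edge) : lattice_edge e -> dir e != d ->
  level d (end1 e) = level d (end2 e).
Proof.
rewrite -val_eqE dir_val; case: d => [[|[|[|//]]] ?];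
  case: e => [[x y] []]; coord_arith.
Qed.

Lemma level_across (d : 'I_3) (e : edge) : lattice_edge e -> dir e = d ->
  level d (black_end e) < level d (white_end e).
Proof.
move=> + /(congr1 val); rewrite dir_val; case: d => [[|[|[|//]]] ?];
  case: e => [[x y] []]; coord_arith.
Qed.

Lemma pos_ends (d : 'I_3) (e : edge) : lattice_edge e -> dir e != d ->
  (pos d (end1 e) = edge_pos d e /\ pos d (end2 e) = edge_pos d e + 1) \/
  (pos d (end2 e) = edge_pos d e /\ pos d (end1 e) = edge_pos d e + 1).
Proof.
rewrite -val_eqE dir_val; case: d => [[|[|[|//]]] ?];
  case: e => [[x y] []]; coord_arith.
Qed.

Lemma edge_pos_inj (d : 'I_3) (e e' : edge) :
  lattice_edge e -> lattice_edge e' -> dir e != d -> dir e' != d ->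
  level d (end1 e) = level d (end1 e') -> edge_pos d e = edge_pos d e' -> e = e'.
Proof.
rewrite -!val_eqE !dir_val; case: d => [[|[|[|//]]] ?];
  case: e => [[x y] []]; case: e' => [[x' y'] []]; coord_arith;
  by f_equal; f_equal; lia.
Qed.

Definition flux (w : vertex -> int) (e : edge) : int := w (white_end e) - w (black_end e).

Definition signed (w : vertex -> int) (v : vertex) : int := if par v then - w v else w v.

Lemma fluxE (w : vertex -> int) (e : edge) :
  flux w e = signed w (end1 e) + signed w (end2 e).
Proof.
have := par_ends e; rewrite /flux /signed /black_end /white_end.
by case: (par (end1 e)); case: (par (end2 e)) => //= _; rewrite addrC.
Qed.

Lemma flux_eq0 (w : vertex -> int) (e : edge) :
  (flux w e == 0) = (w (end1 e) == w (end2 e)).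
Proof.
rewrite /flux /black_end /white_end subr_eq0.
by case: (par (end1 e)); rewrite // eq_sym.
Qed.

Definition level_step (d : 'I_3) (k : int) (v : vertex) : int :=
  if k <= level d v then 1 else 0.

Lemma flux_level_step_along (d : 'I_3) (k : int) (e : edge) :
  lattice_edge e -> dir e != d -> flux (level_step d k) e = 0.
Proof.
by move=> lat nd; apply/eqP; rewrite flux_eq0 /level_step (level_along lat nd).
Qed.

Lemma flux_level_step_across (d : 'I_3) (k : int) (e : edge) :
  lattice_edge e -> dir e = d ->
  flux (level_step d k) e =
    if level d (black_end e) < k <= level d (white_end e) then 1 else 0.
Proof.
move=> lat de; have := level_across lat de; rewrite /flux /level_step.
by move=> *; case_ifs; lia.
Qed.

Definition ray_step (d : 'I_3) (m k : int) (v : vertex) : int :=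
  if (level d v == m) && (k <= pos d v) then 1 else 0.

Lemma flux_ray_step_self (d : 'I_3) (e0 : edge) :
  lattice_edge e0 -> dir e0 != d ->
  flux (ray_step d (level d (end1 e0)) (edge_pos d e0 + 1)) e0 != 0.
Proof.
move=> lat0 nd0; rewrite flux_eq0 /ray_step -(level_along lat0 nd0) eqxx /=.
by case: (pos_ends lat0 nd0) => -[-> ->]; case_ifs; lia.
Qed.

Lemma flux_ray_step_other (d : 'I_3) (e0 e : edge) :
  lattice_edge e0 -> lattice_edge e -> dir e0 != d -> dir e != d -> e != e0 ->
  flux (ray_step d (level d (end1 e0)) (edge_pos d e0 + 1)) e = 0.
Proof.
move=> lat0 lat nd0 nd ne; apply/eqP.
rewrite flux_eq0 /ray_step -(level_along lat nd).
case: (level d (end1 e) =P level d (end1 e0)) => [same_level|_] //=.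
have qne : edge_pos d e != edge_pos d e0.
  by apply: contra_neq ne; apply: edge_pos_inj lat lat0 nd nd0 same_level.
by case: (pos_ends lat nd) => -[-> ->]; case_ifs; lia.
Qed.

Section Forcing.

Variables (V : {fset vertex}) (E : {fset edge}).
Hypothesis E_V : forall e, e \in E -> (end1 e \in V) && (end2 e \in V).
Hypothesis E_lattice : forall e, e \in E -> lattice_edge e.

Lemma matching_sum_ends (M : {fset edge}) (f : vertex -> int) :
  perfect_matching V E M ->
  \sum_(e <- M) (f (end1 e) + f (end2 e)) = \sum_(v <- V) f v.
Proof.
move=> [ME pmV].
transitivity (\sum_(v <- V) \sum_(e <- M | incident v e) f v); last first.
  apply: eq_fbigr => v vV _.
  have /cardfs1P [e0 He0] : #|` [fset e in M | incident v e]| == 1%N by rewrite pmV.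
  by rewrite big_fset_condE He0 big_seq_fset1.
rewrite (exchange_big_dep xpredT) //=; apply: eq_fbigr => e eM _.
have /andP [e1V e2V] := E_V (fsubsetP ME e eM).
rewrite big_fset_condE.
have -> : [fset v in V | incident v e] = end1 e |` [fset end2 e].
  apply/fsetP => v; rewrite !inE /incident [end1 e == v]eq_sym [end2 e == v]eq_sym.
  case: (v =P end1 e) => [->|_] /=; first by rewrite e1V.
  by case: (v =P end2 e) => [->|_]; rewrite ?e2V ?andbF.
by rewrite big_fsetU1 ?big_seq_fset1 // inE end1_neq_end2.
Qed.

(* Conservation: the total flux through a perfect matching does not depend
   on the matching. *)
Lemma matching_flux (M : {fset edge}) (w : vertex -> int) :
  perfect_matching V E M -> \sum_(e <- M) flux w e = \sum_(v <- V) signed w v.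
Proof.
move=> pM; rewrite -(matching_sum_ends _ pM).
by apply: eq_bigr => e _; rewrite fluxE.
Qed.

Lemma flux_sdiff (M M' : {fset edge}) (w : vertex -> int) :
  perfect_matching V E M -> perfect_matching V E M' ->
  \sum_(e <- M `\` M') flux w e = \sum_(e <- M' `\` M) flux w e.
Proof.
move=> pM pM'.
have split_sum (N N' : {fset edge}) : \sum_(e <- N) flux w e =
    \sum_(e <- N `&` N') flux w e + \sum_(e <- N `\` N') flux w e.
  rewrite (big_fsetID _ (mem N')); congr (_ + _); apply: eq_fbigl => e;
  by rewrite !inE andbC.
have := matching_flux w pM; rewrite -(matching_flux w pM').
by rewrite (split_sum M M') (split_sum M' M) fsetIC => /addrI.
Qed.

Lemma sdiff_lattice (M M' : {fset edge}) (e : edge) :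
  perfect_matching V E M -> e \in M `\` M' -> lattice_edge e.
Proof. by move=> [ME _] /fsetDP [eM _]; apply/E_lattice/(fsubsetP ME). Qed.

(* If the d-edges of M are in M', then the d-edges of M' are in M: test
   with the threshold weight at the white level of an offending edge. *)
Lemma matching_dir_back (M M' : {fset edge}) (d : 'I_3) :
  perfect_matching V E M -> perfect_matching V E M' ->
  (forall e, e \in M -> dir e = d -> e \in M') ->
  forall e, e \in M' -> dir e = d -> e \in M.
Proof.
move=> pM pM' dM e0 e0M' de0; apply/negPn/negP => e0M.
have e0D : e0 \in M' `\` M by apply/fsetDP.
have lat0 := sdiff_lattice pM' e0D.
pose w := level_step d (level d (white_end e0)).
have := flux_sdiff w pM pM'.
rewrite big1_fset => [/esym/eqP|e /fsetDP [eM eM'] _]; last first.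
  have eD : e \in M `\` M' by apply/fsetDP.
  apply: flux_level_step_along (sdiff_lattice pM eD) _.
  by apply: contra eM' => /eqP /(dM e eM).
rewrite big_seq psumr_eq0 => [/allP /(_ e0 e0D)|e eD]; last first.
  have latE := sdiff_lattice pM' eD.
  have [de|nd] := eqVneq (dir e) d; last by rewrite flux_level_step_along.
  by rewrite flux_level_step_across //; case: ifP.
by rewrite e0D /= flux_level_step_across // lexx andbT (level_across lat0 de0).
Qed.

(* If M and M' have the same d-edges, the non-d edges of M are in M': test
   with the half-line weight just after an offending edge. *)
Lemma matching_nondir (M M' : {fset edge}) (d : 'I_3) :
  perfect_matching V E M -> perfect_matching V E M' ->
  (forall e, dir e = d -> (e \in M) = (e \in M')) ->
  forall e, dir e != d -> e \in M -> e \in M'.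
Proof.
move=> pM pM' same_dir e0 nd0 e0M; apply/negPn/negP => e0M'.
have e0D : e0 \in M `\` M' by apply/fsetDP.
have lat0 := sdiff_lattice pM e0D.
pose w := ray_step d (level d (end1 e0)) (edge_pos d e0 + 1).
have nondir e : (e \in M) != (e \in M') -> dir e != d.
  by move=> differ; apply: contra_neq differ => /same_dir.
have := flux_sdiff w pM pM'.
rewrite (big_fsetD1 _ e0D) /= !big1_fset ?addr0 => [/eqP|e|e]; last 2 first.
- move=> /fsetDP [eM' eM] _; have eD : e \in M' `\` M by apply/fsetDP.
  apply: flux_ray_step_other (sdiff_lattice pM' eD) nd0 _ _ => //.
    by apply: nondir; rewrite eM' (negbTE eM).
  by apply: contraNneq e0M' => <-.
- move=> /fsetD1P [ne /[dup] eD /fsetDP [eM eM']] _.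
  apply: flux_ray_step_other (sdiff_lattice pM eD) nd0 _ ne => //.
  by apply: nondir; rewrite eM (negbTE eM').
by rewrite (negbTE (flux_ray_step_self lat0 nd0)).
Qed.

Lemma dir_class_forces (M M' : {fset edge}) (d : 'I_3) :
  perfect_matching V E M -> perfect_matching V E M' ->
  (forall e, e \in M -> dir e = d -> e \in M') -> M' = M.
Proof.
move=> pM pM' dM.
have same_dir e : dir e = d -> (e \in M) = (e \in M').
  move=> de; apply/idP/idP => [eM|eM']; first exact: dM.
  exact: matching_dir_back pM pM' dM e eM' de.
apply/fsetP => e; have [/same_dir ->//|nd] := eqVneq (dir e) d.
apply/idP/idP; last exact: matching_nondir pM pM' same_dir e nd.
by apply: matching_nondir pM' pM _ e nd => f /same_dir.
Qed.

Lemma edge_class_complete_forcing (d : 'I_3) :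
  complete_forcing_set V E (edge_class E d).
Proof.
split; first by apply/fsubsetP => e; rewrite inE => /andP [].
move=> M pM; split; first exact: fsubsetIr.
move=> M' pM' sub; apply: (dir_class_forces (d := d) pM pM') => e eM de.
apply: (fsubsetP sub); rewrite in_fsetI eM andbT !inE /=.
by rewrite (fsubsetP (proj1 pM) e eM) de eqxx.
Qed.

End Forcing.

Lemma cell_edges_lattice (c : cell) : valid_cell c -> all lattice_edge (cell_edges c).
Proof.
by case: c => x y; rewrite /valid_cell /lattice_edge /= !evenZE andbT => ?;
  apply/andP; split; lia.
Qed.

Lemma HEdges_ends (C : {fset cell}) (e : edge) :
  e \in HEdges C -> (end1 e \in HVerts C) && (end2 e \in HVerts C).
Proof. by move=> eE; rewrite !in_fsetU !in_imfset ?orbT. Qed.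

Lemma HEdges_lattice (C : {fset cell}) (e : edge) :
  {in C, forall c, valid_cell c} -> e \in HEdges C -> lattice_edge e.
Proof.
move=> valid /imfset2P [c cC [e' e'c ->]].
exact: (allP (cell_edges_lattice (valid c cC))).
Qed.

Local Close Scope ring_scope.

Theorem mainTheorem4 (C : {fset cell}) (d : 'I_3) :
  hexagonal_system C ->
  (exists M, perfect_matching (HVerts C) (HEdges C) M) ->
  (forall d' : 'I_3, #|` edge_class (HEdges C) d| <= #|` edge_class (HEdges C) d'|)%N ->
  cf_le (HVerts C) (HEdges C) #|` edge_class (HEdges C) d|.
Proof.
move=> [_ valid _ _] _ _.
exists (edge_class (HEdges C) d); split => //.
apply: edge_class_complete_forcing => e; first exact: HEdges_ends.
exact: HEdges_lattice.
Qed.
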